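(* The axiom system $\mathbf{AX}^{lp}=\{\mathrm{Taut},\mathrm{MP},\mathrm{Ineq},E5,E6,E7,E8\}$ is sound and complete for $\mathcal{L}^E$ with respect to $\mathcal{M}^{lp}$: a formula of $\mathcal{L}^E$ is provable in $\mathbf{AX}^{lp}$ iff it is true in every lower probability structure.
   Context: Language $\mathcal L^E$: fix primitive propositions $\Phi_0$; propositional formulas built with $\neg,\wedge$; $\mathit{true}$ a tautology, $\mathit{false}=\neg\mathit{true}$. A propositional gamble is $b_1\phi_1+\cdots+b_n\phi_n$ (integers $b_i$); sums and integer multiples are formed termwise, $\phi$ identified with $1\phi$. Formulas are Boolean combinations of expectation inequalities $a_1e(\gamma_1)+\cdots+a_ke(\gamma_k)\ge b$ (integers $a_i,b$); $t\le b$ abbreviates $-t\ge-b$, $t>b$ abbreviates $\neg(t\le b)$, $t=b$ abbreviates $t\ge b\wedge t\le b$, $t_1\ge t_2$ abbreviates $t_1-t_2\ge0$. A lower probability structure is $M=(W,\mathcal F,\mathcal P,\pi)$: $W$ a nonempty set, $\mathcal F$ an algebra on $W$, $\mathcal P$ a set of probability measures on $\mathcal F$, $\pi$ a truth assignment to $\Phi_0$ at each world with every $\{w:\pi(w)(p)=\text{true}\}\in\mathcal F$; $[\![\phi]\!]_M$ is the set of worlds satisfying $\phi$, $[\![\sum b_i\phi_i]\!]_M=\sum b_iX_{[\![\phi_i]\!]_M}$, and $M\models\sum a_ie(\gamma_i)\ge b$ iff $\sum a_i\underline E_{\mathcal P}([\![\gamma_i]\!]_M)\ge b$ where $\underline E_{\mathcal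 P}(X)=\inf_{\mu\in\mathcal P}E_\mu(X)$; Boolean connectives classical. $\mathcal M^{lp}$ is the class of such structures. Axioms: Taut: all instances in $\mathcal L^E$ of propositional tautologies. MP: from $f$ and $f\Rightarrow g$ infer $g$. Ineq: all instances of valid formulas about linear inequalities, i.e. Boolean combinations of inequalities $c_1x_1+\cdots+c_nx_n\ge c$ true under every assignment of reals to the variables, with each variable $x_i$ uniformly replaced by a term $e(\gamma_i)$. E5: $e(\gamma_1)\le e(\gamma_2)$ whenever $\gamma_1\le\gamma_2$ is a valid gamble inequality, i.e. $[\![\gamma_1]\!]_M(w)\le[\![\gamma_2]\!]_M(w)$ for every nonempty set of worlds with truth assignment and every world $w$. E6: $e(\gamma_1+\gamma_2)\ge e(\gamma_1)+e(\gamma_2)$. E7: $e(a\gamma+b\,\mathit{true})=ae(\gamma)+b$ for $a\ge0$. E8: $e(a\gamma+b\,\mathit{false})=ae(\gamma)$ for $a\ge0$. *)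

From Stdlib Require Import Reals List ZArith.
Set Implicit Arguments.
Open Scope R_scope.

Record nelist (A : Type) := NE { ne_hd : A; ne_tl : list A }.
Arguments NE {A} _ _.
Definition ne_list {A} (l : nelist A) : list A := ne_hd l :: ne_tl l.
Definition ne_app {A} (l1 l2 : nelist A) : nelist A :=
  NE (ne_hd l1) (ne_tl l1 ++ ne_list l2).
Definition ne_map {A B} (f : A -> B) (l : nelist A) : nelist B :=
  NE (f (ne_hd l)) (map f (ne_tl l)).
Definition ne_one {A} (a : A) : nelist A := NE a nil.

Inductive pform (Phi0 : Type) : Type :=
| PAtom : Phi0 -> pform Phi0
| PNeg : pform Phi0 -> pform Phi0
| PAnd : pform Phi0 -> pform Phi0 -> pform Phi0.
Arguments PAtom {Phi0} _.
Arguments PNeg {Phi0} _.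
Arguments PAnd {Phi0} _ _.

Fixpoint peval {Phi0} (v : Phi0 -> bool) (phi : pform Phi0) : bool :=
  match phi with
  | PAtom p => v p
  | PNeg f => negb (peval v f)
  | PAnd f g => andb (peval v f) (peval v g)
  end.

(* a propositional tautology (used for the formula [true]) *)
Definition ptautology {Phi0} (phi : pform Phi0) : Prop :=
  forall v : Phi0 -> bool, peval v phi = true.

Definition gamble (Phi0 : Type) := nelist (Z * pform Phi0).
Definition gadd {Phi0} (g1 g2 : gamble Phi0) : gamble Phi0 := ne_app g1 g2.
Definition gscale {Phi0} (a : Z) (g : gamble Phi0) : gamble Phi0 :=
  ne_map (fun bp => ((a * fst bp)%Z, snd bp)) g.
Definition gterm {Phi0} (b : Z) (phi : pform Phi0) : gamble Phi0 := ne_one (b, phi).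

Definition gval {Phi0 W : Type} (pi : W -> Phi0 -> bool) (g : gamble Phi0) (w : W) : R :=
  fold_right (fun bp acc => IZR (fst bp) * (if peval (pi w) (snd bp) then 1 else 0) + acc)
    0 (ne_list g).

Definition gamble_le {Phi0} (g1 g2 : gamble Phi0) : Prop :=
  forall (W : Type) (pi : W -> Phi0 -> bool) (w : W), gval pi g1 w <= gval pi g2 w.

(* a term a1 e(g1) + ... + ak e(gk), k >= 1 *)
Definition term (Phi0 : Type) := nelist (Z * gamble Phi0).

Inductive formula (Phi0 : Type) : Type :=
| FGe : term Phi0 -> Z -> formula Phi0
| FNeg : formula Phi0 -> formula Phi0
| FAnd : formula Phi0 -> formula Phi0 -> formula Phi0.
Arguments FGe {Phi0} _ _.
Arguments FNeg {Phi0} _.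
Arguments FAnd {Phi0} _ _.

Definition fimp {Phi0} (f g : formula Phi0) : formula Phi0 := FNeg (FAnd f (FNeg g)).
Definition e {Phi0} (g : gamble Phi0) : term Phi0 := ne_one (1%Z, g).
Definition tneg {Phi0} (t : term Phi0) : term Phi0 :=
  ne_map (fun ag => ((- fst ag)%Z, snd ag)) t.
Definition tscale {Phi0} (a : Z) (t : term Phi0) : term Phi0 :=
  ne_map (fun ag => ((a * fst ag)%Z, snd ag)) t.
Definition tadd {Phi0} (t1 t2 : term Phi0) : term Phi0 := ne_app t1 t2.
Definition tsub {Phi0} (t1 t2 : term Phi0) : term Phi0 := tadd t1 (tneg t2).
Definition fle {Phi0} (t : term Phi0) (b : Z) : formula Phi0 := FGe (tneg t) (- b)%Z.
Definition feq {Phi0} (t : term Phi0) (b : Z) : formula Phi0 := FAnd (FGe t b) (fle t b).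
Definition fge2 {Phi0} (t1 t2 : term Phi0) : formula Phi0 := FGe (tsub t1 t2) 0%Z.

Inductive sform : Type :=
| SVar : nat -> sform
| SNeg : sform -> sform
| SAnd : sform -> sform -> sform.

Fixpoint seval (v : nat -> bool) (s : sform) : bool :=
  match s with
  | SVar n => v n
  | SNeg s => negb (seval v s)
  | SAnd s1 s2 => andb (seval v s1) (seval v s2)
  end.
Definition stautology (s : sform) : Prop := forall v, seval v s = true.

Fixpoint sinst {Phi0} (sigma : nat -> formula Phi0) (s : sform) : formula Phi0 :=
  match s with
  | SVar n => sigma n
  | SNeg s => FNeg (sinst sigma s)
  | SAnd s1 s2 => FAnd (sinst sigma s1) (sinst sigma s2)
  end.

Inductive lform : Type :=
| LGe : nelist (Z * nat) -> Z -> lform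
| LNeg : lform -> lform
| LAnd : lform -> lform -> lform.

Fixpoint leval (x : nat -> R) (l : lform) : Prop :=
  match l with
  | LGe t c => fold_right (fun ci acc => IZR (fst ci) * x (snd ci) + acc) 0 (ne_list t) >= IZR c
  | LNeg l => ~ leval x l
  | LAnd l1 l2 => leval x l1 /\ leval x l2
  end.
Definition lvalid (l : lform) : Prop := forall x : nat -> R, leval x l.

Fixpoint linst {Phi0} (sigma : nat -> gamble Phi0) (l : lform) : formula Phi0 :=
  match l with
  | LGe t c => FGe (ne_map (fun ci => (fst ci, sigma (snd ci))) t) c
  | LNeg l => FNeg (linst sigma l)
  | LAnd l1 l2 => FAnd (linst sigma l1) (linst sigma l2)
  end.

Inductive provable {Phi0} (tt : pform Phi0) : formula Phi0 -> Prop :=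
| Ax_Taut : forall s sigma, stautology s -> provable tt (sinst sigma s)
| Ax_Ineq : forall l sigma, lvalid l -> provable tt (linst sigma l)
| Ax_E5 : forall g1 g2, gamble_le g1 g2 -> provable tt (fge2 (e g2) (e g1))
| Ax_E6 : forall g1 g2, provable tt (fge2 (e (gadd g1 g2)) (tadd (e g1) (e g2)))
| Ax_E7 : forall (a b : Z) g, (0 <= a)%Z ->
    provable tt (feq (tsub (e (gadd (gscale a g) (gterm b tt))) (tscale a (e g))) b)
| Ax_E8 : forall (a b : Z) g, (0 <= a)%Z ->
    provable tt (feq (tsub (e (gadd (gscale a g) (gterm b (PNeg tt)))) (tscale a (e g))) 0)
| Rule_MP : forall f g, provable tt f -> provable tt (fimp f g) -> provable tt g.

(* subsets of W are predicates, taken up to extensional equality *)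
Definition seteq {W : Type} (A B : W -> Prop) : Prop := forall w, A w <-> B w.

Record algebra (W : Type) := {
  alg_mem : (W -> Prop) -> Prop;
  alg_ext : forall A B, seteq A B -> alg_mem A -> alg_mem B;
  alg_full : alg_mem (fun _ => True);
  alg_compl : forall A, alg_mem A -> alg_mem (fun w => ~ A w);
  alg_union : forall A B, alg_mem A -> alg_mem B -> alg_mem (fun w => A w \/ B w)
}.

Record prob_measure (W : Type) (F : algebra W) := {
  mu : (W -> Prop) -> R;
  mu_ext : forall A B, seteq A B -> mu A = mu B;
  mu_full : mu (fun _ => True) = 1;
  mu_nonneg : forall A, alg_mem F A -> 0 <= mu A;
  mu_add : forall A B, alg_mem F A -> alg_mem F B -> (forall w, A w -> B w -> False) ->
             mu (fun w => A w \/ B w) = mu A + mu B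
}.

Record lp_structure (Phi0 : Type) (W : Type) := {
  lp_W_ne : inhabited W;
  lp_F : algebra W;
  lp_P : prob_measure lp_F -> Prop;
  lp_P_ne : exists P, lp_P P;
  lp_pi : W -> Phi0 -> bool;
  lp_pi_meas : forall p, alg_mem lp_F (fun w => lp_pi w p = true)
}.

Definition is_expectation {W : Type} (m : (W -> Prop) -> R) (X : W -> R) (ex : R) : Prop :=
  exists vs : list R, NoDup vs /\ (forall w, In (X w) vs) /\
    ex = fold_right (fun v acc => v * m (fun w => X w = v) + acc) 0 vs.

Definition is_inf (S : R -> Prop) (l : R) : Prop :=
  (forall x, S x -> l <= x) /\ (forall m, (forall x, S x -> m <= x) -> m <= l).

Definition lower_exp {Phi0 W} (M : lp_structure Phi0 W) (X : W -> R) (l : R) : Prop :=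
  is_inf (fun ex => exists P, lp_P M P /\ is_expectation (mu P) X ex) l.

Definition gsem {Phi0 W} (M : lp_structure Phi0 W) (g : gamble Phi0) : W -> R :=
  gval (lp_pi M) g.

Fixpoint sat {Phi0 W} (M : lp_structure Phi0 W) (f : formula Phi0) : Prop :=
  match f with
  | FGe t b =>
      exists ls : list R,
        Forall2 (fun ag l => lower_exp M (gsem M (snd ag)) l) (ne_list t) ls /\
        fold_right (fun agl acc => IZR (fst (fst agl)) * snd agl + acc) 0
          (combine (ne_list t) ls) >= IZR b
  | FNeg f => ~ sat M f
  | FAnd f g => sat M f /\ sat M g
  end.

Definition lp_valid {Phi0} (f : formula Phi0) : Prop :=
  forall (W : Type) (M : lp_structure Phi0 W), sat M f.

(* In a lower probability structure e(γ) denotes the infimum over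
   P of expectations of the finitely-valued function [[γ]].  Such expectations
   are monotone and linear, so their infima are monotone, superadditive and
   positively affine, which is what E5–E8 say.

   Let g_1, ..., g_k be the gambles of a valid formula f and
   u_1, ..., u_N truth assignments realising every pattern of truth values of
   the propositional formulas occurring in them.  For each j consider the
   linear system in x_1, ..., x_k, p_1, ..., p_N
       p >= 0,   Σ_a p_a = 1,   x_i <= Σ_a p_a g_i(u_a) (all i),
       Σ_a p_a g_j(u_a) <= x_j,
   expressing that the distribution p attains the value x_j on g_j while
   dominating every x_i.  Fourier–Motzkin elimination of p yields finitely
   many integer inequalities Σ_i c_i x_i >= b, with c_i <= 0 for i <> j, that
   hold at every point x_i = g_i(u_a); each of them is derivable from E5–E7.
   Conversely every x satisfying all of them extends to solutions p^1, ...,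
   p^k, and the structure with worlds a and measures p^j has lower
   expectations exactly x, so f holds at x.  Hence f is a linear consequence
   of derivable inequalities and follows by Ineq and MP. *)

From Stdlib Require Import Reals List ZArith.
From Stdlib Require Import Lra Lia Classical ClassicalEpsilon.
Open Scope R_scope.

Fixpoint sumR (n : nat) (f : nat -> R) : R :=
  match n with O => 0 | S n => sumR n f + f n end.

Lemma sumR_ext n f g : (forall i, (i < n)%nat -> f i = g i) -> sumR n f = sumR n g.
Proof. induction n; simpl; intros H; auto. rewrite IHn, H; auto; intros; apply H; lia. Qed.

Lemma sumR_plus n f g : sumR n (fun i => f i + g i) = sumR n f + sumR n g.
Proof. induction n; simpl; [lra|rewrite IHn; lra]. Qed.

Lemma sumR_scal n c f : sumR n (fun i => c * f i) = c * sumR n f.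
Proof. induction n; simpl; [lra|rewrite IHn; lra]. Qed.

Lemma sumR_0 n : sumR n (fun _ => 0) = 0.
Proof. induction n; simpl; [lra|rewrite IHn; lra]. Qed.

Lemma sumR_le n f g : (forall i, (i < n)%nat -> f i <= g i) -> sumR n f <= sumR n g.
Proof.
  induction n; simpl; intros H; [lra|].
  assert (f n <= g n) by (apply H; lia).
  assert (sumR n f <= sumR n g) by (apply IHn; intros; apply H; lia). lra.
Qed.

Lemma sumR_add k n f : sumR (k + n) f = sumR k f + sumR n (fun a => f (k + a)%nat).
Proof.
  induction n; simpl.
  - rewrite Nat.add_0_r; lra.
  - rewrite Nat.add_succ_r; simpl; rewrite IHn; lra.
Qed.

Lemma sumR_delta n j c : (j < n)%nat -> sumR n (fun i => if Nat.eqb i j then c i else 0) = c j.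
Proof.
  induction n; simpl; intros H; [lia|].
  destruct (Nat.eqb_spec n j).
  - subst. rewrite sumR_ext with (g := fun _ => 0), sumR_0; [lra|].
    intros i Hi. destruct (Nat.eqb_spec i j); [lia|auto].
  - rewrite IHn; [lra|lia].
Qed.

Lemma fold_right_seq (F : nat -> R) k :
  fold_right (fun i acc => F i + acc) 0 (seq 0 k) = sumR k F.
Proof.
  assert (Hshift : forall l c, fold_right (fun i acc => F i + acc) c l
                               = fold_right (fun i acc => F i + acc) 0 l + c).
  { induction l; simpl; intros; [lra|rewrite IHl; lra]. }
  induction k; [reflexivity|].
  rewrite seq_S, fold_right_app, Hshift, IHk. simpl. lra.
Qed.

Section ListSums.
Context {A : Type}.

Definition sumL (l : list A) (f : A -> R) : R := fold_right (fun x acc => f x + acc) 0 l.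

Lemma sumL_ext l f g : (forall x, In x l -> f x = g x) -> sumL l f = sumL l g.
Proof. induction l; simpl; intros H; auto. rewrite H, IHl; auto. Qed.

Lemma sumL_plus l f g : sumL l (fun x => f x + g x) = sumL l f + sumL l g.
Proof. induction l; simpl; [lra|rewrite IHl; lra]. Qed.

Lemma sumL_scal l c f : sumL l (fun x => c * f x) = c * sumL l f.
Proof. induction l; simpl; [lra|rewrite IHl; lra]. Qed.

Lemma sumL_0 l : sumL l (fun _ => 0) = 0.
Proof. induction l; simpl; [lra|rewrite IHl; lra]. Qed.

Lemma sumL_le l f g : (forall x, In x l -> f x <= g x) -> sumL l f <= sumL l g.
Proof.
  induction l; simpl; intros H; [lra|].
  assert (f a <= g a) by auto. assert (sumL l f <= sumL l g) by auto. lra.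
Qed.

Lemma sumL_sumR l n f :
  sumL l (fun x => sumR n (fun i => f x i)) = sumR n (fun i => sumL l (fun x => f x i)).
Proof. induction l; simpl. - rewrite sumR_0; auto. - rewrite IHl, <- sumR_plus; auto. Qed.

Lemma sumL_filter l (c : A -> bool) h :
  sumL (filter c l) h = sumL l (fun x => if c x then h x else 0).
Proof. induction l; simpl; auto. destruct (c a); simpl; rewrite IHl; lra. Qed.

Lemma sumL_delta (dec : forall x y : A, {x = y} + {x <> y}) l t h :
  NoDup l -> In t l -> sumL l (fun u => if dec u t then h u else 0) = h t.
Proof.
  induction l; simpl; intros Hn Hi; [contradiction|]. inversion Hn; subst.
  destruct (dec a t).
  - subst. rewrite sumL_ext with (g := fun _ => 0), sumL_0; [lra|].
    intros x Hx. destruct (dec x t); [subst; contradiction|auto].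
  - destruct Hi as [Hi|Hi]; [congruence|]. rewrite IHl; auto; lra.
Qed.

End ListSums.

Lemma sumL_swap {A B} (l1 : list A) (l2 : list B) f :
  sumL l1 (fun x => sumL l2 (fun y => f x y)) = sumL l2 (fun y => sumL l1 (fun x => f x y)).
Proof. induction l1; simpl. - rewrite sumL_0; auto. - rewrite IHl1, <- sumL_plus; auto. Qed.

Lemma map_eq_In {A B} (f g : A -> B) l x : map f l = map g l -> In x l -> f x = g x.
Proof.
  induction l; simpl; intros H Hi; [contradiction|]. injection H; intros.
  destruct Hi; subst; auto.
Qed.

Lemma ne_list_app {A} (l1 l2 : nelist A) : ne_list (ne_app l1 l2) = ne_list l1 ++ ne_list l2.
Proof. reflexivity. Qed.

Lemma ne_list_map {A B} (f : A -> B) l : ne_list (ne_map f l) = map f (ne_list l).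
Proof. reflexivity. Qed.

Section GambleValue.
Context {Phi0 : Type}.

Definition gamble_value (u : Phi0 -> bool) (g : gamble Phi0) : R :=
  fold_right (fun bp acc => IZR (fst bp) * (if peval u (snd bp) then 1 else 0) + acc)
    0 (ne_list g).

Lemma gval_gamble_value W (pi : W -> Phi0 -> bool) g w : gval pi g w = gamble_value (pi w) g.
Proof. reflexivity. Qed.

Definition gamble_props (g : gamble Phi0) : list (pform Phi0) := map snd (ne_list g).

Lemma gamble_value_ext u u' g :
  (forall p, In p (gamble_props g) -> peval u p = peval u' p) ->
  gamble_value u g = gamble_value u' g.
Proof.
  unfold gamble_value, gamble_props. induction (ne_list g); simpl; intros H; auto.
  rewrite H by auto. rewrite IHl; auto.
Qed.

Lemma gamble_value_add u g h : gamble_value u (gadd g h) = gamble_value u g + gamble_value u h.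
Proof.
  unfold gamble_value, gadd. rewrite ne_list_app, fold_right_app.
  generalize (ne_list g) (ne_list h). intros l1 l2. induction l1; simpl; [lra|].
  rewrite IHl1; lra.
Qed.

Lemma gamble_value_scale u a g : gamble_value u (gscale a g) = IZR a * gamble_value u g.
Proof.
  unfold gamble_value, gscale. rewrite ne_list_map. induction (ne_list g); simpl; [lra|].
  rewrite IHl, mult_IZR. lra.
Qed.

Lemma gamble_value_term u b p : gamble_value u (gterm b p) = IZR b * (if peval u p then 1 else 0).
Proof. unfold gamble_value; simpl. lra. Qed.

Lemma gamble_value_lower_bound u g :
  - fold_right (fun bp acc => Rabs (IZR (fst bp)) + acc) 0 (ne_list g) <= gamble_value u g.
Proof.
  unfold gamble_value. induction (ne_list g); simpl; [lra|].
  assert (- Rabs (IZR (fst a)) <= IZR (fst a) * (if peval u (snd a) then 1 else 0)).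
  { pose proof (Rle_abs (- IZR (fst a))). rewrite Rabs_Ropp in *.
    destruct (peval u (snd a)); [rewrite Rmult_1_r|rewrite Rmult_0_r];
      pose proof (Rabs_pos (IZR (fst a))); lra. }
  lra.
Qed.

Definition gamble_valueZ (u : Phi0 -> bool) (g : gamble Phi0) : Z :=
  fold_right (fun bp acc => (fst bp * (if peval u (snd bp) then 1 else 0) + acc)%Z) 0%Z
    (ne_list g).

Lemma IZR_gamble_valueZ u g : IZR (gamble_valueZ u g) = gamble_value u g.
Proof.
  unfold gamble_valueZ, gamble_value. induction (ne_list g); simpl; auto.
  rewrite plus_IZR, mult_IZR, IHl. destruct (peval u (snd a)); simpl; lra.
Qed.

Lemma gamble_props_add g h : gamble_props (gadd g h) = gamble_props g ++ gamble_props h.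
Proof. unfold gamble_props, gadd. rewrite ne_list_app, map_app. auto. Qed.

Lemma gamble_props_scale a g : gamble_props (gscale a g) = gamble_props g.
Proof. unfold gamble_props, gscale. rewrite ne_list_map, map_map. auto. Qed.

End GambleValue.

Fixpoint bool_lists (m : nat) : list (list bool) :=
  match m with
  | O => nil :: nil
  | S m => map (cons true) (bool_lists m) ++ map (cons false) (bool_lists m)
  end.

Lemma bool_lists_In l : In l (bool_lists (length l)).
Proof.
  induction l; simpl; auto. apply in_or_app.
  destruct a; [left|right]; apply in_map; auto.
Qed.

Lemma bool_lists_NoDup m : NoDup (bool_lists m).
Proof.
  induction m; simpl.
  - constructor; auto; constructor.
  - apply NoDup_app.
    + apply NoDup_map_NoDup_ForallPairs; auto. intros x y _ _ H; injection H; auto.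
    + apply NoDup_map_NoDup_ForallPairs; auto. intros x y _ _ H; injection H; auto.
    + intros x H1 H2. apply in_map_iff in H1. apply in_map_iff in H2.
      destruct H1 as [? [<- _]]. destruct H2 as [? [H _]]. discriminate.
Qed.

(** * Expectations of functions determined by finitely many formulas *)

Section AlgebraFacts.
Context {W : Type} (F : algebra W).

Lemma alg_empty : alg_mem F (fun _ => False).
Proof. eapply alg_ext; [|apply alg_compl, alg_full]. intros w; tauto. Qed.

Lemma alg_inter A B : alg_mem F A -> alg_mem F B -> alg_mem F (fun w => A w /\ B w).
Proof.
  intros HA HB.
  eapply alg_ext; [|apply alg_compl, alg_union; apply alg_compl; [exact HA|exact HB]].
  intros w; cbv beta; split; [|tauto]. intros H. split; apply NNPP; tauto.
Qed.

Lemma mu_empty (P : prob_measure F) : mu P (fun _ => False) = 0.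
Proof.
  assert (E : mu P (fun w => False \/ False) = mu P (fun _ => False))
    by (apply mu_ext; intro; tauto).
  rewrite mu_add in E; [lra|apply alg_empty|apply alg_empty|auto].
Qed.

End AlgebraFacts.

Section PatternExpectation.
Context {Phi0 W : Type} (M : lp_structure Phi0 W) (Phi : list (pform Phi0)).

Definition pattern (w : W) : list bool := map (fun p => peval (lp_pi M w) p) Phi.

Definition patterns := bool_lists (length Phi).

Lemma pattern_In w : In (pattern w) patterns.
Proof.
  unfold patterns, pattern.
  rewrite <- (length_map (fun p => peval (lp_pi M w) p) Phi). apply bool_lists_In.
Qed.

Lemma measurable_pform_eq p b : alg_mem (lp_F M) (fun w => peval (lp_pi M w) p = b).
Proof.
  assert (Htrue : forall p, alg_mem (lp_F M) (fun w => peval (lp_pi M w) p = true)).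
  { induction p0; simpl.
    - apply lp_pi_meas.
    - eapply alg_ext; [|apply alg_compl, IHp0]. intros w.
      destruct (peval _ p0); simpl; intuition congruence.
    - eapply alg_ext; [|apply alg_inter; [apply IHp0_1|apply IHp0_2]]. intros w.
      destruct (peval _ p0_1), (peval _ p0_2); simpl; intuition congruence. }
  destruct b; [apply Htrue|].
  eapply alg_ext; [|apply alg_compl, (Htrue p)]. intros w; cbv beta.
  destruct (peval _ p); split; intros H; try congruence; exfalso; auto.
Qed.

Lemma measurable_pattern_eq beta : alg_mem (lp_F M) (fun w => pattern w = beta).
Proof.
  unfold pattern. revert beta; induction Phi as [|p L IH]; intros beta; simpl.
  - destruct beta.
    + eapply alg_ext; [|apply alg_full]. intros; cbv beta; split; auto.
    + eapply alg_ext; [|apply alg_empty]. intros; cbv beta; split; [tauto|discriminate].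
  - destruct beta as [|b beta].
    + eapply alg_ext; [|apply alg_empty]. intros; cbv beta; split; [tauto|discriminate].
    + eapply alg_ext; [|apply alg_inter; [apply (measurable_pform_eq p b)|apply (IH beta)]].
      intros w; cbv beta; split; [intros [? ?]; subst; auto|intros H; injection H; auto].
Qed.

Lemma measurable_pattern_In L : alg_mem (lp_F M) (fun w => In (pattern w) L).
Proof.
  induction L; simpl; [apply alg_empty|].
  eapply alg_ext; [|apply alg_union; [apply (measurable_pattern_eq a)|apply IHL]].
  intros w; cbv beta; simpl; split; intros [H|H]; auto.
Qed.

Lemma mu_pattern_In (P : prob_measure (lp_F M)) L : NoDup L ->
  mu P (fun w => In (pattern w) L) = sumL L (fun beta => mu P (fun w => pattern w = beta)).
Proof.
  induction L; simpl; intros Hn; [apply mu_empty|]. inversion Hn; subst.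
  rewrite (mu_ext P (A := fun w => a = pattern w \/ In (pattern w) L)
                    (B := fun w => pattern w = a \/ In (pattern w) L))
    by (intros w; simpl; intuition).
  rewrite mu_add; [rewrite IHL; auto|apply measurable_pattern_eq|apply measurable_pattern_In|].
  intros w Hw1 Hw2. rewrite Hw1 in Hw2. contradiction.
Qed.

Lemma mu_patterns_sum (P : prob_measure (lp_F M)) :
  sumL patterns (fun beta => mu P (fun w => pattern w = beta)) = 1.
Proof.
  rewrite <- mu_pattern_In by apply bool_lists_NoDup. rewrite <- (mu_full P).
  apply mu_ext. intros w; split; auto; intros; apply pattern_In.
Qed.

(* A world of pattern [beta], if there is one; unrealised patterns have measure 0. *)
Definition representative (beta : list bool) : W :=
  epsilon (lp_W_ne M) (fun w => pattern w = beta).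

Lemma pattern_representative w : pattern (representative (pattern w)) = pattern w.
Proof.
  unfold representative.
  apply (epsilon_spec (lp_W_ne M) (fun w' => pattern w' = pattern w)). eauto.
Qed.

Lemma mu_unrealised_pattern (P : prob_measure (lp_F M)) beta :
  (forall w, pattern w <> beta) -> mu P (fun w => pattern w = beta) = 0.
Proof.
  intros H. rewrite (mu_ext P (A := fun w => pattern w = beta) (B := fun _ => False)).
  - apply mu_empty.
  - intros w; split; [apply H|tauto].
Qed.

Definition pattern_determined (X : W -> R) :=
  forall w w', pattern w = pattern w' -> X w = X w'.

Definition expect (P : prob_measure (lp_F M)) (X : W -> R) : R :=
  sumL patterns (fun beta => mu P (fun w => pattern w = beta) * X (representative beta)).

Section Determined.
Variables (P : prob_measure (lp_F M)) (X : W -> R).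
Hypothesis HX : pattern_determined X.

Lemma mu_level_set v :
  mu P (fun w => X w = v)
  = sumL patterns (fun beta => if Req_EM_T (X (representative beta)) v
                               then mu P (fun w => pattern w = beta) else 0).
Proof.
  rewrite (sumL_ext _ _ (fun beta => if (fun beta => if Req_EM_T (X (representative beta)) v
                                                      then true else false) beta
                                   then mu P (fun w => pattern w = beta) else 0))
    by (intros beta _; destruct (Req_EM_T _ _); auto).
  rewrite <- sumL_filter, <- mu_pattern_In by (apply NoDup_filter, bool_lists_NoDup).
  apply mu_ext. intros w. rewrite filter_In.
  assert (HR : X (representative (pattern w)) = X w) by (apply HX, pattern_representative).
  split.
  - intros <-. split; [apply pattern_In|]. destruct (Req_EM_T _ _); auto.
  - intros [_ H]. destruct (Req_EM_T _ _); [congruence|discriminate].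
Qed.

Lemma level_sum_expect vs : NoDup vs -> (forall w, In (X w) vs) ->
  fold_right (fun v acc => v * mu P (fun w => X w = v) + acc) 0 vs = expect P X.
Proof.
  intros Hn Hc.
  change (sumL vs (fun v => v * mu P (fun w => X w = v)) = expect P X).
  rewrite (sumL_ext vs _ (fun v => sumL patterns (fun beta =>
             v * (if Req_EM_T (X (representative beta)) v
                  then mu P (fun w => pattern w = beta) else 0))))
    by (intros v _; rewrite mu_level_set, sumL_scal; auto).
  rewrite sumL_swap. unfold expect. apply sumL_ext. intros beta _.
  destruct (classic (exists w, pattern w = beta)) as [[w Hw]|Hne].
  - rewrite (sumL_ext vs _ (fun v => if Req_EM_T v (X (representative beta))
                                     then mu P (fun w => pattern w = beta) * v else 0)).
    + rewrite (sumL_delta Req_EM_T); auto.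
    + intros v _. destruct (Req_EM_T (X (representative beta)) v),
        (Req_EM_T v (X (representative beta))); subst; try lra; congruence.
  - rewrite mu_unrealised_pattern by (intros w Hw; apply Hne; eauto).
    rewrite Rmult_0_l. transitivity (sumL vs (fun _ => 0)); [|apply sumL_0].
    apply sumL_ext. intros v _. destruct (Req_EM_T _ _); lra.
Qed.

Lemma is_expectation_iff ex : is_expectation (mu P) X ex <-> ex = expect P X.
Proof.
  set (vs := nodup Req_EM_T (map (fun beta => X (representative beta)) patterns)).
  assert (Hvs : forall w, In (X w) vs).
  { intros w. apply nodup_In, in_map_iff. exists (pattern w).
    split; [apply HX, pattern_representative|apply pattern_In]. }
  split.
  - intros [vs' [Hn [Hc ->]]]. apply level_sum_expect; auto.
  - intros ->. exists vs. split; [apply NoDup_nodup|split; auto].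
    symmetry. apply level_sum_expect; auto. apply NoDup_nodup.
Qed.

End Determined.

Lemma expect_le P X Y : (forall w, X w <= Y w) -> expect P X <= expect P Y.
Proof.
  intros H. apply sumL_le. intros b _.
  apply Rmult_le_compat_l; auto. apply mu_nonneg, measurable_pattern_eq.
Qed.

Lemma expect_linear P X Y a b :
  expect P (fun w => a * X w + b * Y w) = a * expect P X + b * expect P Y.
Proof. unfold expect. rewrite <- !sumL_scal, <- sumL_plus. apply sumL_ext. intros; lra. Qed.

Lemma expect_const P c : expect P (fun _ => c) = c.
Proof.
  unfold expect.
  rewrite (sumL_ext _ _ (fun beta => c * mu P (fun w => pattern w = beta))) by (intros; lra).
  rewrite sumL_scal, mu_patterns_sum. lra.
Qed.

Lemma expect_ext P X Y : (forall w, X w = Y w) -> expect P X = expect P Y.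
Proof. intros H. apply sumL_ext. intros; rewrite H; auto. Qed.

End PatternExpectation.

Lemma is_inf_exists (S : R -> Prop) :
  (exists x, S x) -> (exists lb, forall x, S x -> lb <= x) -> exists l, is_inf S l.
Proof.
  intros [x0 Hx0] [lb Hlb].
  destruct (completeness (fun y => S (- y))) as [m [Hm1 Hm2]].
  - exists (- lb). intros y Hy. specialize (Hlb _ Hy). lra.
  - exists (- x0). rewrite Ropp_involutive. auto.
  - exists (- m). split.
    + intros x Hx. assert (-x <= m) by (apply Hm1; rewrite Ropp_involutive; auto). lra.
    + intros m' Hm'. assert (m <= - m'). { apply Hm2. intros y Hy. specialize (Hm' _ Hy). lra. }
      lra.
Qed.

Lemma is_inf_unique S l1 l2 : is_inf S l1 -> is_inf S l2 -> l1 = l2.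
Proof. intros [H1 H1'] [H2 H2']. apply Rle_antisym; auto. Qed.

Lemma is_inf_ext (S S' : R -> Prop) l : (forall x, S x <-> S' x) -> is_inf S l -> is_inf S' l.
Proof.
  intros H [H1 H2]. split.
  - intros x Hx; apply H1, H; auto.
  - intros m Hm; apply H2; intros; apply Hm, H; auto.
Qed.

Section InfimumOverFamily.
Context {T : Type} (Q : T -> Prop).

Definition value_set (f : T -> R) : R -> Prop := fun ex => exists P, Q P /\ ex = f P.

Lemma is_inf_value_set_le f P l : is_inf (value_set f) l -> Q P -> l <= f P.
Proof. intros [H _] HP. apply H. exists P; auto. Qed.

Lemma is_inf_mono f h l1 l2 : is_inf (value_set f) l1 -> is_inf (value_set h) l2 ->
  (forall P, Q P -> f P <= h P) -> l1 <= l2.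
Proof.
  intros H1 [_ B2] H. apply B2. intros x [P [HP ->]].
  apply Rle_trans with (f P); auto. eapply is_inf_value_set_le; eauto.
Qed.

Lemma is_inf_superadditive f1 f2 f3 l1 l2 l3 :
  is_inf (value_set f1) l1 -> is_inf (value_set f2) l2 -> is_inf (value_set f3) l3 ->
  (forall P, Q P -> f1 P + f2 P <= f3 P) -> l1 + l2 <= l3.
Proof.
  intros H1 H2 [_ B3] H. apply B3. intros x [P [HP ->]].
  pose proof (is_inf_value_set_le _ _ _ H1 HP). pose proof (is_inf_value_set_le _ _ _ H2 HP).
  specialize (H P HP). lra.
Qed.

Lemma is_inf_affine f1 f2 l1 l2 a b : (exists P, Q P) -> 0 <= a ->
  is_inf (value_set f1) l1 -> is_inf (value_set f2) l2 ->
  (forall P, Q P -> f2 P = a * f1 P + b) -> l2 = a * l1 + b.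
Proof.
  intros [P0 HP0] Ha H1 H2 H. destruct H1 as [A1 B1]. destruct H2 as [A2 B2].
  apply Rle_antisym.
  - destruct (Req_dec a 0) as [Ha0|Ha0].
    + subst. apply A2. exists P0. split; auto. rewrite H; auto; lra.
    + assert (l1 >= (l2 - b) / a).
      { apply Rle_ge, B1. intros x [P [HP ->]].
        assert (l2 <= f2 P) by (apply A2; exists P; auto). rewrite H in H0 by auto.
        apply Rmult_le_reg_l with a. lra. field_simplify; lra. }
      assert (a * l1 >= a * ((l2 - b) / a)) by (apply Rle_ge, Rmult_le_compat_l; lra).
      field_simplify in H1; lra.
  - apply B2. intros x [P [HP ->]]. rewrite H by auto.
    assert (l1 <= f1 P) by (apply A1; exists P; auto). nra.
Qed.

End InfimumOverFamily.

Section LowerExpectation.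
Context {Phi0 W : Type} (M : lp_structure Phi0 W).

Lemma pattern_determined_gsem Phi g :
  incl (gamble_props g) Phi -> pattern_determined M Phi (gsem M g).
Proof.
  intros Hi w w' Hp. unfold gsem. rewrite !gval_gamble_value. apply gamble_value_ext.
  intros p Hp'. apply (map_eq_In _ _ Phi p Hp). apply Hi; auto.
Qed.

Lemma expectations_gsem Phi g : incl (gamble_props g) Phi -> forall ex,
  (exists P, lp_P M P /\ is_expectation (mu P) (gsem M g) ex)
  <-> value_set (lp_P M) (fun P => expect M Phi P (gsem M g)) ex.
Proof.
  intros Hi ex. pose proof (pattern_determined_gsem Phi g Hi) as Hd.
  split; intros [P [HP H]]; exists P; split; auto.
  - apply (is_expectation_iff M Phi P (gsem M g) Hd ex); auto.
  - apply (is_expectation_iff M Phi P (gsem M g) Hd ex); auto.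
Qed.

Lemma lower_exp_exists g : exists l, lower_exp M (gsem M g) l.
Proof.
  assert (Hg := expectations_gsem (gamble_props g) g (incl_refl _)).
  apply is_inf_exists.
  - destruct (lp_P_ne M) as [P HP]. exists (expect M (gamble_props g) P (gsem M g)).
    apply Hg. exists P; auto.
  - set (c := fold_right (fun bp acc => Rabs (IZR (fst bp)) + acc) 0 (ne_list g)).
    exists (- c). intros x Hx. apply Hg in Hx. destruct Hx as [P [HP ->]].
    rewrite <- (expect_const M (gamble_props g) P (- c)).
    apply expect_le. intros w. apply gamble_value_lower_bound.
Qed.

Definition lexp (g : gamble Phi0) : R :=
  epsilon (inhabits 0) (fun l => lower_exp M (gsem M g) l).

Lemma lexp_spec g : lower_exp M (gsem M g) (lexp g).
Proof. unfold lexp. apply epsilon_spec, lower_exp_exists. Qed.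

Lemma lexp_unique g l : lower_exp M (gsem M g) l -> l = lexp g.
Proof. intros H. eapply is_inf_unique; eauto. apply lexp_spec. Qed.

Lemma lexp_is_inf Phi g : incl (gamble_props g) Phi ->
  is_inf (value_set (lp_P M) (fun P => expect M Phi P (gsem M g))) (lexp g).
Proof. intros Hi. eapply is_inf_ext; [|apply lexp_spec]. apply expectations_gsem; auto. Qed.

End LowerExpectation.

Definition term_value {Phi0} (V : gamble Phi0 -> R) (l : list (Z * gamble Phi0)) : R :=
  fold_right (fun ag acc => IZR (fst ag) * V (snd ag) + acc) 0 l.

Fixpoint holds {Phi0} (V : gamble Phi0 -> R) (f : formula Phi0) : Prop :=
  match f with
  | FGe t b => term_value V (ne_list t) >= IZR b
  | FNeg f => ~ holds V f
  | FAnd f g => holds V f /\ holds V g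
  end.

Lemma sat_iff_holds {Phi0 W} (M : lp_structure Phi0 W) f : sat M f <-> holds (lexp M) f.
Proof.
  induction f as [t b| |]; cbn [sat holds]; [|rewrite IHf; tauto|rewrite IHf1, IHf2; tauto].
  set (lexps := map (fun ag : Z * gamble Phi0 => lexp M (snd ag))).
  assert (Hforced : forall l ls, Forall2 (fun (ag : Z * gamble Phi0) l =>
                                   lower_exp M (gsem M (snd ag)) l) l ls -> ls = lexps l).
  { intros l ls H; induction H; simpl; auto. f_equal; auto. apply lexp_unique; auto. }
  assert (Hvalue : forall l, fold_right (fun agl acc => IZR (fst (fst agl)) * snd agl + acc) 0
                               (combine l (lexps l)) = term_value (lexp M) l).
  { induction l; simpl; auto. rewrite IHl; auto. }
  split.
  - intros [ls [H1 H2]]. apply Hforced in H1. subst. rewrite <- Hvalue. exact H2.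
  - intros H. exists (lexps (ne_list t)). split; [|rewrite Hvalue; auto].
    clear. induction (ne_list t); simpl; constructor; auto. apply lexp_spec.
Qed.

Lemma holds_sinst {Phi0} V (sigma : nat -> formula Phi0) s :
  holds V (sinst sigma s)
  <-> seval (fun n => if excluded_middle_informative (holds V (sigma n)) then true else false) s
      = true.
Proof.
  induction s; simpl.
  - destruct (excluded_middle_informative _); split; auto; discriminate.
  - rewrite IHs. destruct (seval _ s); simpl; split; auto; try discriminate; congruence.
  - rewrite IHs1, IHs2. destruct (seval _ s1), (seval _ s2); simpl; intuition discriminate.
Qed.

Lemma holds_linst {Phi0} V (sigma : nat -> gamble Phi0) l :
  holds V (linst sigma l) <-> leval (fun i => V (sigma i)) l.
Proof.
  induction l; cbn [holds linst leval]; [|rewrite IHl; tauto|rewrite IHl1, IHl2; tauto].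
  unfold term_value. rewrite ne_list_map.
  enough (E : forall l, fold_right (fun ag acc => IZR (fst ag) * V (snd ag) + acc) 0
                          (map (fun ci : Z * nat => (fst ci, sigma (snd ci))) l)
                        = fold_right (fun ci acc => IZR (fst ci) * V (sigma (snd ci)) + acc) 0 l)
    by (rewrite E; tauto).
  induction l as [|a l IH]; simpl; auto. rewrite IH; auto.
Qed.

Section TermValue.
Context {Phi0 : Type} (V : gamble Phi0 -> R).

Lemma term_value_app l1 l2 : term_value V (l1 ++ l2) = term_value V l1 + term_value V l2.
Proof. induction l1; simpl; [lra|]. unfold term_value in *; simpl. rewrite IHl1. lra. Qed.

Lemma term_value_tadd (t1 t2 : term Phi0) :
  term_value V (ne_list (tadd t1 t2)) = term_value V (ne_list t1) + term_value V (ne_list t2).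
Proof. unfold tadd. rewrite ne_list_app. apply term_value_app. Qed.

Lemma term_value_tscale a (t : term Phi0) :
  term_value V (ne_list (tscale a t)) = IZR a * term_value V (ne_list t).
Proof.
  unfold tscale. rewrite ne_list_map. unfold term_value.
  induction (ne_list t); simpl; [lra|]. rewrite IHl, mult_IZR. lra.
Qed.

Lemma term_value_map_opp l :
  term_value V (map (fun ag => ((- fst ag)%Z, snd ag)) l) = - term_value V l.
Proof. unfold term_value. induction l; simpl; [lra|]. rewrite IHl, opp_IZR. lra. Qed.

Lemma term_value_tneg (t : term Phi0) : term_value V (ne_list (tneg t)) = - term_value V (ne_list t).
Proof. unfold tneg. rewrite ne_list_map. apply term_value_map_opp. Qed.

Lemma term_value_tsub (t1 t2 : term Phi0) :
  term_value V (ne_list (tsub t1 t2)) = term_value V (ne_list t1) - term_value V (ne_list t2).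
Proof. unfold tsub. rewrite term_value_tadd, term_value_tneg. lra. Qed.

Lemma term_value_e (g : gamble Phi0) : term_value V (ne_list (e g)) = V g.
Proof. unfold term_value; simpl. lra. Qed.

Lemma term_value_cons x l : term_value V (x :: l) = IZR (fst x) * V (snd x) + term_value V l.
Proof. reflexivity. Qed.

End TermValue.

Ltac simpl_holds :=
  unfold feq, fle, fge2 in *; cbn [holds ne_list ne_hd ne_tl] in *;
  repeat rewrite ?term_value_tsub, ?term_value_tadd, ?term_value_tneg, ?term_value_tscale,
    ?term_value_e, ?term_value_cons in *;
  unfold term_value, ne_list in *; simpl in *;
  repeat rewrite ?Z.mul_1_r, ?Z.opp_involutive, ?opp_IZR, ?mult_IZR in *.

(** * Soundness *)

Section Soundness.
Context {Phi0 W : Type} (M : lp_structure Phi0 W).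

Lemma lexp_mono g1 g2 : gamble_le g1 g2 -> lexp M g1 <= lexp M g2.
Proof.
  intros H. set (Phi := gamble_props g1 ++ gamble_props g2).
  apply (is_inf_mono (lp_P M) (fun P => expect M Phi P (gsem M g1))
                              (fun P => expect M Phi P (gsem M g2))).
  1-2: apply lexp_is_inf; intros x Hx; apply in_or_app; auto.
  intros P _. apply expect_le. intros w.
  exact (H unit (fun _ => lp_pi M w) tt).
Qed.

Lemma lexp_superadditive g1 g2 : lexp M g1 + lexp M g2 <= lexp M (gadd g1 g2).
Proof.
  set (Phi := gamble_props g1 ++ gamble_props g2).
  apply (is_inf_superadditive (lp_P M) (fun P => expect M Phi P (gsem M g1))
           (fun P => expect M Phi P (gsem M g2)) (fun P => expect M Phi P (gsem M (gadd g1 g2)))).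
  1-2: apply lexp_is_inf; intros x Hx; apply in_or_app; auto.
  1: apply lexp_is_inf; unfold Phi; rewrite gamble_props_add; apply incl_refl.
  intros P _.
  rewrite (expect_ext M Phi P (gsem M (gadd g1 g2))
             (fun w => 1 * gsem M g1 w + 1 * gsem M g2 w)), expect_linear; [lra|].
  intros w. unfold gsem. rewrite !gval_gamble_value, gamble_value_add. lra.
Qed.

Lemma lexp_affine (a b : Z) g p : (0 <= a)%Z -> ptautology p \/ b = 0%Z ->
  lexp M (gadd (gscale a g) (gterm b p)) = IZR a * lexp M g + IZR b.
Proof.
  intros Ha Hp. set (Phi := gamble_props g ++ p :: nil).
  apply (is_inf_affine (lp_P M) (fun P => expect M Phi P (gsem M g))
           (fun P => expect M Phi P (gsem M (gadd (gscale a g) (gterm b p)))));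
    [apply lp_P_ne|apply IZR_le; auto| | |].
  - apply lexp_is_inf. intros x Hx; apply in_or_app; auto.
  - apply lexp_is_inf. unfold Phi. rewrite gamble_props_add, gamble_props_scale.
    intros x Hx; auto.
  - intros P _.
    rewrite (expect_ext M Phi P _ (fun w => IZR a * gsem M g w + IZR b * (fun _ => 1) w)),
      expect_linear, expect_const; [lra|].
    intros w. unfold gsem.
    rewrite !gval_gamble_value, gamble_value_add, gamble_value_scale, gamble_value_term.
    destruct Hp as [Hp|Hp]; [rewrite Hp|subst]; lra.
Qed.

End Soundness.

Theorem soundness {Phi0} (tt : pform Phi0) (Htt : ptautology tt) f :
  provable tt f -> forall W (M : lp_structure Phi0 W), holds (lexp M) f.
Proof.
  induction 1; intros W M.
  - apply holds_sinst. apply H.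
  - apply holds_linst. apply H.
  - simpl_holds. pose proof (lexp_mono M g1 g2 H). lra.
  - simpl_holds. pose proof (lexp_superadditive M g1 g2). lra.
  - simpl_holds. pose proof (lexp_affine M a b g tt H (or_introl Htt)). lra.
  - simpl_holds.
    (* [b (not true)] vanishes everywhere, so it does not affect the lower expectation *)
    assert (E : lexp M (gadd (gscale a g) (gterm b (PNeg tt)))
                = lexp M (gadd (gscale a g) (gterm 0 (PNeg tt)))).
    { apply Rle_antisym; apply lexp_mono; intros W' pi w;
        rewrite !gval_gamble_value, !gamble_value_add, !gamble_value_term;
        simpl; rewrite Htt; simpl; lra. }
    pose proof (lexp_affine M a 0 g (PNeg tt) H (or_intror eq_refl)). lra.
  - specialize (IHprovable1 W M). specialize (IHprovable2 W M). simpl in IHprovable2.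
    apply NNPP. tauto.
Qed.

(** * Linear consequences are derivable by Ineq and MP *)

Fixpoint formula_gambles {Phi0} (f : formula Phi0) : list (gamble Phi0) :=
  match f with
  | FGe t _ => map snd (ne_list t)
  | FNeg f => formula_gambles f
  | FAnd f g => formula_gambles f ++ formula_gambles g
  end.

Fixpoint first_gamble {Phi0} (f : formula Phi0) : gamble Phi0 :=
  match f with FGe t _ => snd (ne_hd t) | FNeg f => first_gamble f | FAnd f _ => first_gamble f end.

Lemma first_gamble_In {Phi0} (f : formula Phi0) : In (first_gamble f) (formula_gambles f).
Proof.
  induction f as [[hd tl] b|f IH|f1 IH1 f2 IH2]; simpl; auto. apply in_or_app; auto.
Qed.

Lemma holds_ext {Phi0} (V V' : gamble Phi0 -> R) f :
  (forall g, In g (formula_gambles f) -> V g = V' g) -> (holds V f <-> holds V' f).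
Proof.
  induction f as [t b| |]; intros H; cbn [holds formula_gambles] in *.
  - enough (E : term_value V (ne_list t) = term_value V' (ne_list t)) by (rewrite E; tauto).
    unfold term_value. induction (ne_list t) as [|a l IH]; simpl in *; auto.
    rewrite H, IH; auto.
  - rewrite IHf; auto; tauto.
  - rewrite IHf1, IHf2; try tauto; intros; apply H; apply in_or_app; auto.
Qed.

Section LinearAbstraction.
Context {Phi0 : Type} (O : list (gamble Phi0)) (g0 : gamble Phi0).

(* Equality of gambles is only classically decidable. *)
Fixpoint index_of (l : list (gamble Phi0)) (g : gamble Phi0) : nat :=
  match l with
  | nil => 0%nat
  | h :: l => if excluded_middle_informative (h = g) then 0%nat else S (index_of l g)
  end.

Lemma nth_index_of l g : In g l -> nth (index_of l g) l g0 = g.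
Proof.
  induction l; simpl; intros H; [contradiction|].
  destruct (excluded_middle_informative (a = g)); auto. destruct H; [congruence|auto].
Qed.

Fixpoint to_lform (f : formula Phi0) : lform :=
  match f with
  | FGe t b => LGe (ne_map (fun ag => (fst ag, index_of O (snd ag))) t) b
  | FNeg f => LNeg (to_lform f)
  | FAnd f g => LAnd (to_lform f) (to_lform g)
  end.

Lemma linst_to_lform f : incl (formula_gambles f) O ->
  linst (fun i => nth i O g0) (to_lform f) = f.
Proof.
  induction f; simpl; intros H.
  - f_equal. destruct t as [[a g] tl]. unfold ne_map; simpl. f_equal.
    + rewrite nth_index_of; auto. apply H; simpl; auto.
    + rewrite map_map. rewrite <- (map_id tl) at 2. apply map_ext_in. intros [a' g'] Hi; simpl.
      rewrite nth_index_of; auto. apply H; simpl; right. apply in_map_iff. exists (a', g'); auto.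
  - rewrite IHf; auto.
  - rewrite IHf1, IHf2; auto; intros g Hg; apply H, in_or_app; auto.
Qed.

Lemma leval_to_lform x f : leval x (to_lform f) <-> holds (fun g => x (index_of O g)) f.
Proof.
  induction f; cbn [to_lform leval holds]; [|rewrite IHf; tauto|rewrite IHf1, IHf2; tauto].
  rewrite ne_list_map. unfold term_value.
  enough (E : forall l, fold_right (fun ci acc => IZR (fst ci) * x (snd ci) + acc) 0
                          (map (fun ag : Z * gamble Phi0 => (fst ag, index_of O (snd ag))) l)
                        = fold_right (fun ag acc => IZR (fst ag) * x (index_of O (snd ag)) + acc)
                            0 l) by (rewrite E; tauto).
  induction l; simpl; auto. rewrite IHl; auto.
Qed.

Definition limp (p q : lform) := LNeg (LAnd p (LNeg q)).

Definition lform_chain (prems : list (formula Phi0)) (c : formula Phi0) : lform :=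
  fold_right (fun F acc => limp (to_lform F) acc) (to_lform c) prems.

Lemma linst_lform_chain prems c : (forall F, In F (c :: prems) -> incl (formula_gambles F) O) ->
  linst (fun i => nth i O g0) (lform_chain prems c) = fold_right fimp c prems.
Proof.
  induction prems; simpl; intros H.
  - apply linst_to_lform, H; simpl; auto.
  - unfold fimp. rewrite linst_to_lform, IHprems; auto.
    intros F [HF|HF]; apply H; simpl; auto.
Qed.

Lemma leval_lform_chain x prems c :
  (Forall (fun F => leval x (to_lform F)) prems -> leval x (to_lform c)) ->
  leval x (lform_chain prems c).
Proof.
  induction prems; simpl; intros H; [apply H; constructor|].
  intros [H1 H2]. apply H2, IHprems. intros HF. apply H. constructor; auto.
Qed.

End LinearAbstraction.

Lemma provable_mp_chain {Phi0} (tt : pform Phi0) prems c : Forall (provable tt) prems ->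
  provable tt (fold_right fimp c prems) -> provable tt c.
Proof. induction 1; simpl; intros H1; auto. apply IHForall. exact (Rule_MP H H1). Qed.

Lemma provable_linear_consequence {Phi0} (tt : pform Phi0) prems c :
  Forall (provable tt) prems ->
  (forall V : gamble Phi0 -> R, Forall (holds V) prems -> holds V c) -> provable tt c.
Proof.
  intros Hp Hv. set (O := flat_map formula_gambles (c :: prems)).
  apply (provable_mp_chain tt prems c Hp).
  rewrite <- (linst_lform_chain O (first_gamble c) prems c).
  - apply Ax_Ineq. intros x. apply leval_lform_chain. intros HF. apply leval_to_lform, Hv.
    rewrite Forall_forall in *. intros F HF'. apply leval_to_lform, HF; auto.
  - intros F HF g Hg. apply in_flat_map. eauto.
Qed.

Ltac conclude_linear HF :=
  apply (provable_linear_consequence _ _ _ HF);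
  let V := fresh "V" in let HV := fresh "HV" in intros V HV;
  repeat match goal with H : Forall _ (_ :: _) |- _ => inversion_clear H end;
  simpl_holds.

Tactic Notation "linear_from" constr(H1) :=
  conclude_linear (Forall_cons _ H1 (Forall_nil _)).
Tactic Notation "linear_from" constr(H1) constr(H2) constr(H3) :=
  conclude_linear (Forall_cons _ H1 (Forall_cons _ H2 (Forall_cons _ H3 (Forall_nil _)))).
Tactic Notation "linear_from" constr(H1) constr(H2) constr(H3) constr(H4) :=
  conclude_linear
    (Forall_cons _ H1 (Forall_cons _ H2 (Forall_cons _ H3 (Forall_cons _ H4 (Forall_nil _))))).

Section Derivations.
Context {Phi0 : Type} (tt : pform Phi0).
Hypothesis Htt : ptautology tt.

Definition gsum (l : list (Z * gamble Phi0)) : gamble Phi0 :=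
  fold_right (fun ag acc => gadd (gscale (fst ag) (snd ag)) acc) (gterm 0 tt) l.

Lemma gamble_value_gsum u l :
  gamble_value u (gsum l)
  = fold_right (fun ag acc => IZR (fst ag) * gamble_value u (snd ag) + acc) 0 l.
Proof.
  induction l; simpl.
  - rewrite gamble_value_term. lra.
  - unfold gsum in *; simpl. rewrite gamble_value_add, gamble_value_scale, IHl. auto.
Qed.

Lemma provable_e_scale (a : Z) g : (0 <= a)%Z ->
  provable tt (feq (tsub (e (gscale a g)) (tscale a (e g))) 0).
Proof.
  intros Ha.
  pose proof (Ax_E7 tt 0%Z g Ha) as H7.
  assert (H5a : provable tt (fge2 (e (gscale a g)) (e (gadd (gscale a g) (gterm 0 tt))))).
  { apply Ax_E5. intros W pi w. rewrite !gval_gamble_value, gamble_value_add, gamble_value_term. lra. }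
  assert (H5b : provable tt (fge2 (e (gadd (gscale a g) (gterm 0 tt))) (e (gscale a g)))).
  { apply Ax_E5. intros W pi w. rewrite !gval_gamble_value, gamble_value_add, gamble_value_term. lra. }
  linear_from H7 H5a H5b; lra.
Qed.

Lemma provable_e_superadditive_sum l b : (forall ag, In ag l -> (0 <= fst ag)%Z) ->
  provable tt (FGe (NE (1%Z, gadd (gsum l) (gterm b tt))
                       (map (fun ag => ((- fst ag)%Z, snd ag)) l)) b).
Proof.
  induction l as [|[m h] l IH]; intros Hl.
  - pose proof (Ax_E7 tt b (gterm 0 tt) (Z.le_refl 0)) as H7.
    change (gscale 0 (gterm 0 tt)) with (gsum nil) in H7.
    linear_from H7; lra.
  - assert (Hm : (0 <= m)%Z) by (apply (Hl (m, h)); simpl; auto).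
    specialize (IH (fun ag H => Hl ag (or_intror H))).
    pose proof (provable_e_scale m h Hm) as Hs.
    pose proof (Ax_E6 tt (gscale m h) (gadd (gsum l) (gterm b tt))) as H6.
    assert (H5 : provable tt (fge2 (e (gadd (gsum ((m, h) :: l)) (gterm b tt)))
                                   (e (gadd (gscale m h) (gadd (gsum l) (gterm b tt)))))).
    { apply Ax_E5. intros W pi w. rewrite !gval_gamble_value. unfold gsum; simpl.
      rewrite !gamble_value_add. lra. }
    linear_from IH Hs H6 H5; lra.
Qed.

Lemma term_value_map_seq (G : nat -> Z) (H : nat -> gamble Phi0) V k :
  term_value V (map (fun i => (G i, H i)) (seq 0 k)) = sumR k (fun i => IZR (G i) * V (H i)).
Proof.
  rewrite <- fold_right_seq. unfold term_value.
  induction (seq 0 k); simpl; auto. rewrite IHl; auto.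
Qed.

(* Terms are nonempty lists, so the empty sum is written [0 e(gl 0)]. *)
Definition weighted_term (gl : nat -> gamble Phi0) (k : nat) (v : nat -> Z) : term Phi0 :=
  match map (fun i => (v i, gl i)) (seq 0 k) with
  | nil => NE (0%Z, gl 0%nat) nil
  | x :: r => NE x r
  end.

Lemma term_value_weighted_term V gl k v :
  term_value V (ne_list (weighted_term gl k v)) = sumR k (fun i => IZR (v i) * V (gl i)).
Proof.
  rewrite <- term_value_map_seq. unfold weighted_term.
  destruct (map _ (seq 0 k)); unfold term_value; simpl; auto. lra.
Qed.

Lemma split_coefficients (v : nat -> Z) k j :
  (forall i, (i < k)%nat -> i <> j -> (v i <= 0)%Z) ->
  exists (m : nat -> Z) (c : Z), (forall i, (i < k)%nat -> (0 <= m i)%Z) /\ (0 <= c)%Z /\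
    forall i, v i = (- m i + if Nat.eqb i j then c else 0)%Z.
Proof.
  intros Hv.
  exists (fun i => if Nat.eqb i j then Z.max 0 (- v j) else (- v i)%Z), (Z.max 0 (v j)).
  split; [|split; [lia|]].
  - intros i Hi. destruct (Nat.eqb_spec i j); [lia|]. specialize (Hv i Hi n). lia.
  - intros i. destruct (Nat.eqb_spec i j); subst; lia.
Qed.

(* Writing v = -m + c δ_j with m, c >= 0, the hypothesis says c g_j >= Σ m_i g_i + b
   pointwise; E5 and superadditivity give c e(g_j) >= Σ m_i e(g_i) + b. *)
Lemma provable_pointwise_bound (gl : nat -> gamble Phi0) k (v : nat -> Z) b j :
  (j < k)%nat -> (forall i, (i < k)%nat -> i <> j -> (v i <= 0)%Z) ->
  (forall u, sumR k (fun i => IZR (v i) * gamble_value u (gl i)) >= IZR b) ->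
  provable tt (FGe (weighted_term gl k v) b).
Proof.
  intros Hj Hs Hu.
  destruct (split_coefficients v k j Hs) as [m [c [Hm [Hc Hv]]]].
  assert (Hsum : forall X : nat -> R, sumR k (fun i => IZR (v i) * X i)
                                      = - sumR k (fun i => IZR (m i) * X i) + IZR c * X j).
  { intros X.
    rewrite (sumR_ext k _ (fun i => -1 * (IZR (m i) * X i)
                                    + (if Nat.eqb i j then IZR c * X i else 0))).
    - rewrite sumR_plus, sumR_scal, sumR_delta; auto. lra.
    - intros i _. rewrite Hv, plus_IZR, opp_IZR. destruct (Nat.eqb i j); lra. }
  set (lm := map (fun i => (m i, gl i)) (seq 0 k)).
  assert (Hdom : provable tt (fge2 (e (gscale c (gl j))) (e (gadd (gsum lm) (gterm b tt))))).
  { apply Ax_E5. intros W pi w.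
    rewrite !gval_gamble_value, gamble_value_add, gamble_value_scale, gamble_value_term,
      gamble_value_gsum, Htt.
    specialize (Hu (pi w)). rewrite Hsum in Hu.
    pose proof (term_value_map_seq m gl (gamble_value (pi w)) k). unfold term_value in H.
    unfold lm. rewrite H. lra. }
  assert (Hsuper := provable_e_superadditive_sum lm b).
  specialize (Hsuper ltac:(intros ag Hag; unfold lm in Hag; apply in_map_iff in Hag;
                           destruct Hag as [i [<- Hi]]; apply in_seq in Hi; apply Hm; lia)).
  pose proof (provable_e_scale c (gl j) Hc) as Hscale.
  linear_from Hdom Hsuper Hscale.
  change (term_value V (ne_list (weighted_term gl k v)) >= IZR b).
  rewrite term_value_weighted_term, (Hsum (fun i => V (gl i))).
  pose proof (term_value_map_opp V lm) as E. unfold lm in E at 2.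
  rewrite term_value_map_seq in E. unfold term_value in E. lra.
Qed.

End Derivations.

(** * Fourier–Motzkin elimination *)

(* [(c, b)] stands for the inequality Σ_i c_i y_i >= b. *)
Definition constraint := ((nat -> Z) * Z)%type.

Definition dot (n : nat) (c : nat -> Z) (y : nat -> R) := sumR n (fun i => IZR (c i) * y i).

Definition satisfies n (c : constraint) y := dot n (fst c) y >= IZR (snd c).

(* A nonnegative combination of [P] and [Q] cancelling variable [n] when P_n > 0 > Q_n. *)
Definition eliminate (n : nat) (P Q : constraint) : constraint :=
  ((fun i => (- fst Q n) * fst P i + fst P n * fst Q i)%Z,
   ((- fst Q n) * snd P + fst P n * snd Q)%Z).

Definition fm_step (n : nat) (L : list constraint) : list constraint :=
  filter (fun c => Z.eqb (fst c n) 0) L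
  ++ flat_map (fun P => map (eliminate n P) (filter (fun c => Z.ltb (fst c n) 0) L))
       (filter (fun c => Z.ltb 0 (fst c n)) L).

(* Eliminates the variables k + N - 1, ..., k. *)
Fixpoint fm_eliminate (k N : nat) (L : list constraint) : list constraint :=
  match N with O => L | S N => fm_eliminate k N (fm_step (k + N) L) end.

Definition update (y : nat -> R) n z := fun i => if Nat.eqb i n then z else y i.

Lemma dot_update n c y z : dot n c (update y n z) = dot n c y.
Proof.
  apply sumR_ext. intros i Hi. unfold update. destruct (Nat.eqb_spec i n); [lia|auto].
Qed.

Lemma dot_combination n a b c d y :
  dot n (fun i => (a * c i + b * d i)%Z) y = IZR a * dot n c y + IZR b * dot n d y.
Proof.
  unfold dot. rewrite <- !sumR_scal, <- sumR_plus. apply sumR_ext. intros.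
  rewrite plus_IZR, !mult_IZR. ring.
Qed.

Lemma fold_Rmax_ge x0 l u : In u (x0 :: l) -> u <= fold_right Rmax x0 l.
Proof.
  induction l; simpl; intros Hu; [destruct Hu; [subst; lra|contradiction]|].
  destruct Hu as [Hu|[Hu|Hu]]; [| subst; apply Rmax_l |];
    (apply Rle_trans with (fold_right Rmax x0 l); [apply IHl; simpl; auto|apply Rmax_r]).
Qed.

Lemma fold_Rmax_In x0 l : In (fold_right Rmax x0 l) (x0 :: l).
Proof.
  induction l; simpl; auto. destruct (Rle_dec a (fold_right Rmax x0 l)).
  - rewrite Rmax_right by auto. simpl in IHl. destruct IHl; auto.
  - rewrite Rmax_left by lra. auto.
Qed.

Lemma fold_Rmin_le x0 l u : In u (x0 :: l) -> fold_right Rmin x0 l <= u.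
Proof.
  induction l; simpl; intros Hu; [destruct Hu; [subst; lra|contradiction]|].
  destruct Hu as [Hu|[Hu|Hu]]; [| subst; apply Rmin_l |];
    (apply Rle_trans with (fold_right Rmin x0 l); [apply Rmin_r|apply IHl; simpl; auto]).
Qed.

Section FourierMotzkinStep.
Variables (n : nat) (y : nat -> R).

(* The value of y_n at which [P] becomes tight. *)
Definition tight_value (P : constraint) := (IZR (snd P) - dot n (fst P) y) / IZR (fst P n).

Lemma satisfies_update P z :
  satisfies (S n) P (update y n z) <-> dot n (fst P) y + IZR (fst P n) * z >= IZR (snd P).
Proof.
  unfold satisfies.
  change (dot (S n) (fst P) (update y n z)) with
    (dot n (fst P) (update y n z) + IZR (fst P n) * update y n z n).
  rewrite dot_update. unfold update at 1. rewrite Nat.eqb_refl. tauto.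
Qed.

Lemma satisfies_update_pos P z : (0 < fst P n)%Z -> tight_value P <= z ->
  satisfies (S n) P (update y n z).
Proof.
  intros Hp Hz. apply satisfies_update. unfold tight_value in Hz. apply IZR_lt in Hp.
  apply Rmult_le_compat_r with (r := IZR (fst P n)) in Hz; [|lra].
  field_simplify in Hz; lra.
Qed.

Lemma satisfies_update_neg P z : (fst P n < 0)%Z -> z <= tight_value P ->
  satisfies (S n) P (update y n z).
Proof.
  intros Hn Hz. apply satisfies_update. unfold tight_value in Hz. apply IZR_lt in Hn.
  apply Rmult_le_compat_neg_l with (r := IZR (fst P n)) in Hz; [|lra].
  rewrite (Rmult_comm _ (_ / _)) in Hz. field_simplify in Hz; lra.
Qed.

Lemma tight_value_le P Q : (0 < fst P n)%Z -> (fst Q n < 0)%Z ->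
  satisfies n (eliminate n P Q) y -> tight_value P <= tight_value Q.
Proof.
  intros HP HQ H. unfold satisfies, eliminate in H; simpl in H. rewrite dot_combination in H.
  rewrite plus_IZR, !mult_IZR, opp_IZR in H. unfold tight_value.
  apply IZR_lt in HP. apply IZR_lt in HQ.
  set (a := IZR (fst P n)) in *. set (q := IZR (fst Q n)) in *.
  set (u := (IZR (snd P) - dot n (fst P) y) / a).
  set (w := (IZR (snd Q) - dot n (fst Q) y) / q).
  assert (Eu : u * a = IZR (snd P) - dot n (fst P) y) by (unfold u; field; lra).
  assert (Ew : w * q = IZR (snd Q) - dot n (fst Q) y) by (unfold w; field; lra).
  assert (a * q * (u - w) >= 0) by nra.
  destruct (Rle_dec u w); auto. exfalso. assert (a * q < 0) by nra. nra.
Qed.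

(* Take y_n at least every lower bound (from P_n > 0) and at most every upper bound. *)
Lemma fm_step_extend L : (forall c, In c (fm_step n L) -> satisfies n c y) ->
  exists z, forall c, In c L -> satisfies (S n) c (update y n z).
Proof.
  intros H.
  set (lowers := map tight_value (filter (fun c => Z.ltb 0 (fst c n)) L)).
  set (uppers := map tight_value (filter (fun c => Z.ltb (fst c n) 0) L)).
  exists (fold_right Rmax (fold_right Rmin 0 uppers) lowers). intros c Hc.
  destruct (Z.lt_trichotomy (fst c n) 0) as [Hn|[Hz|Hp]].
  - apply satisfies_update_neg; auto.
    assert (Hup : In (tight_value c) uppers) by (apply in_map, filter_In; split; [|apply Z.ltb_lt]; auto).
    destruct (fold_Rmax_In (fold_right Rmin 0 uppers) lowers) as [E|Hin]; rewrite <- ?E.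
    + apply fold_Rmin_le. simpl; auto.
    + apply in_map_iff in Hin. destruct Hin as [P [<- HP]].
      apply filter_In in HP. destruct HP as [HP HPp]. apply Z.ltb_lt in HPp.
      apply tight_value_le; auto. apply H, in_or_app. right. apply in_flat_map.
      exists P. split; [apply filter_In; split; [|apply Z.ltb_lt]; auto|].
      apply in_map, filter_In. split; [|apply Z.ltb_lt]; auto.
  - apply satisfies_update. rewrite Hz, Rmult_0_l, Rplus_0_r.
    apply H, in_or_app. left. apply filter_In. split; [|apply Z.eqb_eq]; auto.
  - apply satisfies_update_pos; auto. apply fold_Rmax_ge. right.
    apply in_map, filter_In. split; [|apply Z.ltb_lt]; auto.
Qed.

End FourierMotzkinStep.

Lemma fm_eliminate_extend k N : forall L y,
  (forall c, In c (fm_eliminate k N L) -> satisfies k c y) ->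
  exists y', (forall i, (i < k)%nat -> y' i = y i) /\ forall c, In c L -> satisfies (k + N) c y'.
Proof.
  induction N; simpl; intros L y H.
  - exists y. rewrite Nat.add_0_r. split; auto.
  - destruct (IHN _ _ H) as [y1 [Hy1 Hs1]].
    destruct (fm_step_extend (k + N) y1 L Hs1) as [z Hz].
    exists (update y1 (k + N) z). split.
    + intros i Hi. unfold update. destruct (Nat.eqb_spec i (k + N)); [lia|auto].
    + intros c Hc. rewrite Nat.add_succ_r. apply Hz; auto.
Qed.

Section FourierMotzkinInvariant.
Variable Good : constraint -> Prop.
Hypothesis Good_combination : forall (a b : Z) P Q, (0 <= a)%Z -> (0 <= b)%Z -> Good P -> Good Q ->
  Good ((fun i => a * fst P i + b * fst Q i)%Z, (a * snd P + b * snd Q)%Z).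

Definition good_below n (c : constraint) := Good c /\ forall t, (n <= t)%nat -> fst c t = 0%Z.

Lemma fm_step_good n L : (forall c, In c L -> good_below (S n) c) ->
  forall c, In c (fm_step n L) -> good_below n c.
Proof.
  intros H c Hc. apply in_app_or in Hc. destruct Hc as [Hc|Hc].
  - apply filter_In in Hc. destruct Hc as [Hc Hz]. apply Z.eqb_eq in Hz.
    destruct (H c Hc) as [G1 G2]. split; auto.
    intros t Ht. destruct (Nat.eq_dec t n); [subst; auto|apply G2; lia].
  - apply in_flat_map in Hc. destruct Hc as [P [HP Hc]].
    apply in_map_iff in Hc. destruct Hc as [Q [<- HQ]].
    apply filter_In in HP. apply filter_In in HQ.
    destruct HP as [HP HPp]. destruct HQ as [HQ HQn].
    apply Z.ltb_lt in HPp. apply Z.ltb_lt in HQn.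
    destruct (H P HP) as [GP ZP]. destruct (H Q HQ) as [GQ ZQ]. split.
    + apply Good_combination; auto; lia.
    + intros t Ht. unfold eliminate; simpl. destruct (Nat.eq_dec t n); [subst; ring|].
      rewrite (ZP t), (ZQ t) by lia. ring.
Qed.

Lemma fm_eliminate_good k N : forall L, (forall c, In c L -> good_below (k + N) c) ->
  forall c, In c (fm_eliminate k N L) -> good_below k c.
Proof.
  induction N; simpl; intros L H; [rewrite Nat.add_0_r in H; auto|].
  apply IHN, fm_step_good. intros c Hc. rewrite <- Nat.add_succ_r. auto.
Qed.

End FourierMotzkinInvariant.

(** * Completeness *)

Section DerivedConstraints.
Context {Phi0 : Type} (f : formula Phi0).

Definition ngambles := length (formula_gambles f).
Definition gamble_at (i : nat) := nth i (formula_gambles f) (first_gamble f).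
Definition props := flat_map gamble_props (formula_gambles f).
Definition profile (u : Phi0 -> bool) := map (fun p => peval u p) props.

Definition profile_witness (beta : list bool) : list (Phi0 -> bool) :=
  match excluded_middle_informative (exists u, profile u = beta) with
  | left H => proj1_sig (constructive_indefinite_description _ H) :: nil
  | right _ => nil
  end.

(* One truth assignment for each realisable profile. *)
Definition valuations := flat_map profile_witness (bool_lists (length props)).
Definition nvaluations := length valuations.
Definition valuation (a : nat) := nth a valuations (fun _ => true).

Lemma ngambles_pos : (0 < ngambles)%nat.
Proof.
  unfold ngambles. pose proof (first_gamble_In f).
  destruct (formula_gambles f); simpl in *; [contradiction|lia].
Qed.

Lemma valuations_cover u : exists a, (a < nvaluations)%nat /\ profile (valuation a) = profile u.
Proof.
  assert (Hin : exists w, In w valuations /\ profile w = profile u).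
  { assert (Hb : In (profile u) (bool_lists (length props))).
    { unfold profile. rewrite <- (length_map (fun p => peval u p) props). apply bool_lists_In. }
    destruct (excluded_middle_informative (exists u0, profile u0 = profile u)) as [H|H] eqn:E.
    - exists (proj1_sig (constructive_indefinite_description _ H)). split.
      + apply in_flat_map. exists (profile u). split; auto. unfold profile_witness.
        rewrite E. simpl; auto.
      + apply (proj2_sig (constructive_indefinite_description _ H)).
    - exfalso; apply H; exists u; auto. }
  destruct Hin as [w [Hw Hp]]. destruct (In_nth valuations w (fun _ => true) Hw) as [a [Ha Hn]].
  exists a. split; auto. unfold valuation. rewrite Hn; auto.
Qed.

Lemma nvaluations_pos : (0 < nvaluations)%nat.
Proof. destruct (valuations_cover (fun _ => true)) as [a [Ha _]]. lia. Qed.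

Lemma gamble_props_at i : (i < ngambles)%nat -> incl (gamble_props (gamble_at i)) props.
Proof.
  intros Hi p Hp. apply in_flat_map. exists (gamble_at i). split; auto. apply nth_In. auto.
Qed.

Lemma gamble_value_profile u u' i : (i < ngambles)%nat -> profile u = profile u' ->
  gamble_value u (gamble_at i) = gamble_value u' (gamble_at i).
Proof.
  intros Hi H. apply gamble_value_ext. intros p Hp.
  apply (map_eq_In _ _ props p H). apply (gamble_props_at i Hi); auto.
Qed.

Local Notation k := ngambles.
Local Notation N := nvaluations.

Definition payoff i a := gamble_value (valuation a) (gamble_at i).

(* Variables [t < k] are the x_t, variables [k + a] (a < N) are the p_a. *)
Definition block (cx cp : nat -> Z) : nat -> Z :=
  fun t => if Nat.ltb t k then cx t else if Nat.ltb t (k + N) then cp (t - k)%nat else 0%Z.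

Definition lower_constraint i : constraint :=
  (block (fun t => if Nat.eqb t i then (-1)%Z else 0%Z)
         (fun a => gamble_valueZ (valuation a) (gamble_at i)), 0%Z).
Definition upper_constraint j : constraint :=
  (block (fun t => if Nat.eqb t j then 1%Z else 0%Z)
         (fun a => (- gamble_valueZ (valuation a) (gamble_at j))%Z), 0%Z).
Definition nonneg_constraint a : constraint :=
  (block (fun _ => 0%Z) (fun a' => if Nat.eqb a' a then 1%Z else 0%Z), 0%Z).
Definition mass_ge : constraint := (block (fun _ => 0%Z) (fun _ => 1%Z), 1%Z).
Definition mass_le : constraint := (block (fun _ => 0%Z) (fun _ => (-1)%Z), (-1)%Z).

Definition system j : list constraint :=
  upper_constraint j :: mass_ge :: mass_le ::
  map lower_constraint (seq 0 k) ++ map nonneg_constraint (seq 0 N).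

Lemma block_x cx cp t : (t < k)%nat -> block cx cp t = cx t.
Proof. intros H. unfold block. destruct (Nat.ltb_spec t k); [auto|lia]. Qed.

Lemma block_p cx cp a : (a < N)%nat -> block cx cp (k + a)%nat = cp a.
Proof.
  intros H. unfold block. destruct (Nat.ltb_spec (k + a) k); [lia|].
  destruct (Nat.ltb_spec (k + a) (k + N)); [|lia]. f_equal; lia.
Qed.

Lemma block_out cx cp t : (k + N <= t)%nat -> block cx cp t = 0%Z.
Proof.
  intros H. unfold block. destruct (Nat.ltb_spec t k); [lia|].
  destruct (Nat.ltb_spec t (k + N)); [lia|auto].
Qed.

Lemma dot_block cx cp y :
  dot (k + N) (block cx cp) y
  = sumR k (fun t => IZR (cx t) * y t) + sumR N (fun a => IZR (cp a) * y (k + a)%nat).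
Proof.
  unfold dot. rewrite sumR_add. f_equal.
  - apply sumR_ext. intros; rewrite block_x; auto.
  - apply sumR_ext. intros; rewrite block_p; auto.
Qed.

(* Every constraint of [system j] holds at the points x_i = payoff i a, p = δ_a, and only
   the x_j-coefficient can be positive; both properties survive nonnegative combinations. *)
Definition vertex_valid j (c : constraint) :=
  (forall i, (i < k)%nat -> i <> j -> (fst c i <= 0)%Z) /\
  forall a, (a < N)%nat ->
    IZR (fst c (k + a)%nat) >= IZR (snd c) - sumR k (fun i => IZR (fst c i) * payoff i a).

Lemma vertex_valid_combination j : forall (a b : Z) P Q, (0 <= a)%Z -> (0 <= b)%Z ->
  vertex_valid j P -> vertex_valid j Q ->
  vertex_valid j ((fun i => a * fst P i + b * fst Q i)%Z, (a * snd P + b * snd Q)%Z).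
Proof.
  intros a b P Q Ha Hb [P1 P2] [Q1 Q2]. split; simpl.
  - intros i Hi Hij. specialize (P1 i Hi Hij). specialize (Q1 i Hi Hij). nia.
  - intros x Hx. specialize (P2 x Hx). specialize (Q2 x Hx).
    rewrite (sumR_ext k _ (fun i => IZR a * (IZR (fst P i) * payoff i x)
                                  + IZR b * (IZR (fst Q i) * payoff i x))).
    + rewrite sumR_plus, !sumR_scal, !plus_IZR, !mult_IZR.
      apply IZR_le in Ha. apply IZR_le in Hb. nra.
    + intros i _. rewrite plus_IZR, !mult_IZR. ring.
Qed.

Lemma block_good j cx cp b : (forall i, (i < k)%nat -> i <> j -> (cx i <= 0)%Z) ->
  (forall a, (a < N)%nat -> IZR (cp a) >= IZR b - sumR k (fun i => IZR (cx i) * payoff i a)) ->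
  good_below (vertex_valid j) (k + N) (block cx cp, b).
Proof.
  intros H1 H2. split; [split|].
  - intros i Hi Hij. simpl. rewrite block_x; auto.
  - intros a Ha. simpl. rewrite block_p by auto.
    rewrite (sumR_ext k _ (fun i => IZR (cx i) * payoff i a)) by (intros; rewrite block_x; auto).
    auto.
  - intros t Ht. simpl. apply block_out; auto.
Qed.

Lemma system_good j : (j < k)%nat -> forall c, In c (system j) -> good_below (vertex_valid j) (k + N) c.
Proof.
  intros Hj c Hc. unfold system in Hc. simpl in Hc.
  assert (Hzero : forall a, sumR k (fun i => IZR 0 * payoff i a) = 0)
    by (intros; rewrite (sumR_ext k _ (fun _ => 0)), sumR_0; [auto|intros; simpl; lra]).
  destruct Hc as [<-|[<-|[<-|Hc]]]; [| apply block_good; [intros; lia|intros; rewrite Hzero; simpl; lra]..|].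
  - apply block_good; [intros i Hi Hij; destruct (Nat.eqb_spec i j); lia|].
    intros a Ha. rewrite (sumR_ext k _ (fun i => if Nat.eqb i j then payoff i a else 0)).
    + rewrite sumR_delta, opp_IZR, IZR_gamble_valueZ by auto. unfold payoff. lra.
    + intros i _. destruct (Nat.eqb i j); simpl; lra.
  - apply in_app_or in Hc.
    destruct Hc as [Hc|Hc]; apply in_map_iff in Hc; destruct Hc as [i [<- Hi]]; apply in_seq in Hi.
    + apply block_good; [intros i' _ _; destruct (Nat.eqb i' i); lia|].
      intros a Ha. rewrite (sumR_ext k _ (fun t => if Nat.eqb t i then - payoff t a else 0)).
      * rewrite sumR_delta, IZR_gamble_valueZ by lia. unfold payoff. lra.
      * intros t _. destruct (Nat.eqb t i); simpl; lra.
    + apply block_good; [intros; lia|]. intros a Ha. rewrite Hzero.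
      destruct (Nat.eqb a i); simpl; lra.
Qed.

Lemma derived_constraint_spec j c : (j < k)%nat -> In c (fm_eliminate k N (system j)) ->
  (forall i, (i < k)%nat -> i <> j -> (fst c i <= 0)%Z) /\
  forall a, (a < N)%nat -> sumR k (fun i => IZR (fst c i) * payoff i a) >= IZR (snd c).
Proof.
  intros Hj Hc.
  destruct (fm_eliminate_good (vertex_valid j) (vertex_valid_combination j) k N (system j)
              (system_good j Hj) c Hc) as [[H1 H2] HZ].
  split; auto. intros a Ha. specialize (H2 a Ha). rewrite HZ in H2 by lia. simpl in H2. lra.
Qed.

Definition derived_constraints :=
  flat_map (fun j => fm_eliminate k N (system j)) (seq 0 k).

Definition premises :=
  map (fun c : constraint => FGe (weighted_term gamble_at k (fst c)) (snd c)) derived_constraints.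

Lemma premises_provable (tt : pform Phi0) : ptautology tt -> Forall (provable tt) premises.
Proof.
  intros Htt. apply Forall_forall. intros F HF. apply in_map_iff in HF.
  destruct HF as [c [<- Hc]]. apply in_flat_map in Hc. destruct Hc as [j [Hj Hc]].
  apply in_seq in Hj. destruct (derived_constraint_spec j c) as [Hneg Hpts]; [lia|auto|].
  apply (provable_pointwise_bound tt Htt gamble_at k (fst c) (snd c) j); [lia|auto|].
  intros u. destruct (valuations_cover u) as [a [Ha Hp]]. specialize (Hpts a Ha).
  rewrite (sumR_ext k _ (fun i => IZR (fst c i) * payoff i a)); auto.
  intros i Hi. unfold payoff. rewrite (gamble_value_profile (valuation a) u i); auto.
Qed.

End DerivedConstraints.

Section Countermodel.
Context {Phi0 : Type} (f : formula Phi0) (V : gamble Phi0 -> R).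
Hypothesis HV : Forall (holds V) (premises f).

Local Notation k := (ngambles f).
Local Notation N := (nvaluations f).

Definition xvalue (i : nat) := V (gamble_at f i).

Lemma derived_satisfied j c : (j < k)%nat -> In c (fm_eliminate k N (system f j)) ->
  satisfies k c xvalue.
Proof.
  intros Hj Hc. rewrite Forall_forall in HV.
  assert (H : holds V (FGe (weighted_term (gamble_at f) k (fst c)) (snd c))).
  { apply HV, in_map_iff. exists c. split; auto. apply in_flat_map.
    exists j. split; auto. apply in_seq. lia. }
  cbn [holds] in H. rewrite term_value_weighted_term in H. exact H.
Qed.

Definition solution j : nat -> R :=
  epsilon (inhabits (fun _ : nat => 0)) (fun y =>
    (forall i, (i < k)%nat -> y i = xvalue i) /\
    forall c, In c (system f j) -> satisfies (k + N) c y).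

Lemma solution_spec j : (j < k)%nat ->
  (forall i, (i < k)%nat -> solution j i = xvalue i) /\
  forall c, In c (system f j) -> satisfies (k + N) c (solution j).
Proof.
  intros Hj. unfold solution. apply epsilon_spec.
  apply (fm_eliminate_extend k N (system f j) xvalue). intros c Hc.
  apply (derived_satisfied j c Hj Hc).
Qed.

Lemma solution_nonneg j a : (j < k)%nat -> (a < N)%nat -> 0 <= solution j (k + a)%nat.
Proof.
  intros Hj Ha. destruct (solution_spec j Hj) as [_ H].
  specialize (H (nonneg_constraint f a)
                ltac:(unfold system; right; right; right; apply in_or_app; right;
                      apply in_map, in_seq; lia)).
  unfold satisfies, nonneg_constraint in H. simpl in H. rewrite dot_block in H.
  rewrite (sumR_ext k _ (fun _ => 0)), sumR_0 in H by (intros; simpl; lra).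
  rewrite (sumR_ext N _ (fun a' => if Nat.eqb a' a then solution j (k + a')%nat else 0)),
    sumR_delta in H by (auto; intros a' _; destruct (Nat.eqb a' a); simpl; lra).
  lra.
Qed.

Lemma solution_mass j : (j < k)%nat -> sumR N (fun a => solution j (k + a)%nat) = 1.
Proof.
  intros Hj. destruct (solution_spec j Hj) as [_ H].
  pose proof (H (mass_ge f) ltac:(unfold system; simpl; auto)) as H1.
  pose proof (H (mass_le f) ltac:(unfold system; simpl; auto)) as H2.
  unfold satisfies, mass_ge, mass_le in *. simpl in H1, H2. rewrite dot_block in H1, H2.
  rewrite (sumR_ext k _ (fun _ => 0)), sumR_0 in H1, H2 by (intros; simpl; lra).
  rewrite (sumR_ext N _ (fun a => solution j (k + a)%nat)) in H1 by (intros; simpl; lra).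
  rewrite sumR_scal in H2. lra.
Qed.

Lemma solution_dominates j i : (j < k)%nat -> (i < k)%nat ->
  sumR N (fun a => solution j (k + a)%nat * payoff f i a) >= xvalue i.
Proof.
  intros Hj Hi. destruct (solution_spec j Hj) as [Hx H].
  specialize (H (lower_constraint f i)
                ltac:(unfold system; right; right; right; apply in_or_app; left;
                      apply in_map, in_seq; lia)).
  unfold satisfies, lower_constraint in H. simpl in H. rewrite dot_block in H.
  rewrite (sumR_ext k _ (fun t => if Nat.eqb t i then - solution j t else 0)), sumR_delta in H
    by (auto; intros t _; destruct (Nat.eqb t i); simpl; lra).
  rewrite (sumR_ext N _ (fun a => solution j (k + a)%nat * payoff f i a)) in H
    by (intros; rewrite IZR_gamble_valueZ; unfold payoff; lra).
  rewrite Hx in H by auto. lra.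
Qed.

Lemma solution_attains j : (j < k)%nat ->
  sumR N (fun a => solution j (k + a)%nat * payoff f j a) <= xvalue j.
Proof.
  intros Hj. destruct (solution_spec j Hj) as [Hx H].
  specialize (H (upper_constraint f j) ltac:(unfold system; simpl; auto)).
  unfold satisfies, upper_constraint in H. simpl in H. rewrite dot_block in H.
  rewrite (sumR_ext k _ (fun t => if Nat.eqb t j then solution j t else 0)), sumR_delta in H
    by (auto; intros t _; destruct (Nat.eqb t j); simpl; lra).
  rewrite (sumR_ext N _ (fun a => -1 * (solution j (k + a)%nat * payoff f j a))), sumR_scal in H
    by (intros; rewrite opp_IZR, IZR_gamble_valueZ; unfold payoff; lra).
  rewrite Hx in H by auto. lra.
Qed.

Definition weight j a :=
  if Nat.ltb j k then solution j (k + a)%nat else if Nat.eqb a 0 then 1 else 0.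

Lemma weight_nonneg j a : (a < N)%nat -> 0 <= weight j a.
Proof.
  intros Ha. unfold weight. destruct (Nat.ltb_spec j k); [apply solution_nonneg; auto|].
  destruct (Nat.eqb a 0); lra.
Qed.

Lemma weight_mass j : sumR N (weight j) = 1.
Proof.
  unfold weight. destruct (Nat.ltb_spec j k); [apply solution_mass; auto|].
  exact (sumR_delta N 0 (fun _ => 1) (nvaluations_pos f)).
Qed.

Definition indicator (A : nat -> Prop) (a : nat) : R :=
  if excluded_middle_informative (A a) then 1 else 0.

Definition weighted_mu j (A : nat -> Prop) : R := sumR N (fun a => weight j a * indicator A a).

Definition discrete_algebra : algebra nat :=
  {| alg_mem := fun _ => True; alg_ext := fun _ _ _ _ => I; alg_full := I;
     alg_compl := fun _ _ => I; alg_union := fun _ _ _ _ => I |}.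

Lemma weighted_mu_ext j A B : seteq A B -> weighted_mu j A = weighted_mu j B.
Proof.
  intros H. apply sumR_ext. intros a _. unfold indicator.
  destruct (excluded_middle_informative (A a)), (excluded_middle_informative (B a));
    auto; exfalso; firstorder.
Qed.

Lemma weighted_mu_full j : weighted_mu j (fun _ => True) = 1.
Proof.
  unfold weighted_mu. rewrite <- (weight_mass j). apply sumR_ext. intros. unfold indicator.
  destruct (excluded_middle_informative True); [lra|tauto].
Qed.

Lemma weighted_mu_nonneg j A : alg_mem discrete_algebra A -> 0 <= weighted_mu j A.
Proof.
  intros _. unfold weighted_mu. rewrite <- (sumR_0 N). apply sumR_le. intros a Ha.
  unfold indicator. destruct (excluded_middle_informative (A a));
    pose proof (weight_nonneg j a Ha); nra.
Qed.

Lemma weighted_mu_add j A B : alg_mem discrete_algebra A -> alg_mem discrete_algebra B ->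
  (forall w, A w -> B w -> False) ->
  weighted_mu j (fun w => A w \/ B w) = weighted_mu j A + weighted_mu j B.
Proof.
  intros _ _ H. unfold weighted_mu. rewrite <- sumR_plus. apply sumR_ext. intros a _.
  unfold indicator.
  destruct (excluded_middle_informative (A a \/ B a)), (excluded_middle_informative (A a)),
    (excluded_middle_informative (B a)); try lra; firstorder.
Qed.

Definition weighted_measure j : prob_measure discrete_algebra :=
  {| mu := weighted_mu j; mu_ext := weighted_mu_ext j; mu_full := weighted_mu_full j;
     mu_nonneg := weighted_mu_nonneg j; mu_add := weighted_mu_add j |}.

Definition is_weighted_measure (P : prob_measure discrete_algebra) :=
  exists j, (j < k)%nat /\ forall A, mu P A = weighted_mu j A.

Lemma is_weighted_measure_exists : exists P, is_weighted_measure P.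
Proof. exists (weighted_measure 0). exists 0%nat. split; auto. apply ngambles_pos. Qed.

Definition countermodel : lp_structure Phi0 nat :=
  {| lp_W_ne := inhabits 0%nat; lp_F := discrete_algebra; lp_P := is_weighted_measure;
     lp_P_ne := is_weighted_measure_exists; lp_pi := valuation f; lp_pi_meas := fun _ => I |}.

Lemma expect_countermodel P j X : (forall A, mu P A = weighted_mu j A) ->
  pattern_determined countermodel (props f) X ->
  expect countermodel (props f) P X = sumR N (fun a => weight j a * X a).
Proof.
  intros HP HX. unfold expect. set (pt := pattern countermodel (props f)).
  set (rep := representative countermodel (props f)).
  rewrite (sumL_ext _ _ (fun beta => sumR N (fun a =>
             weight j a * indicator (fun w => pt w = beta) a * X (rep beta)))).
  2:{ intros beta _. rewrite HP. unfold weighted_mu. rewrite Rmult_comm, <- sumR_scal.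
      apply sumR_ext. intros; lra. }
  rewrite sumL_sumR. apply sumR_ext. intros a Ha.
  rewrite (sumL_ext _ _ (fun beta => if list_eq_dec Bool.bool_dec beta (pt a)
                                     then weight j a * X (rep beta) else 0)).
  - rewrite (sumL_delta (list_eq_dec Bool.bool_dec));
      [f_equal; apply HX, pattern_representative|apply bool_lists_NoDup|apply pattern_In].
  - intros beta _. unfold indicator.
    destruct (excluded_middle_informative (pt a = beta)), (list_eq_dec Bool.bool_dec beta (pt a));
      subst; try congruence; lra.
Qed.

Lemma lexp_countermodel i : (i < k)%nat -> lexp countermodel (gamble_at f i) = xvalue i.
Proof.
  intros Hi. symmetry.
  eapply is_inf_unique; [|apply (lexp_is_inf countermodel (props f)), gamble_props_at; auto].
  assert (Hd : pattern_determined countermodel (props f) (gsem countermodel (gamble_at f i)))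
    by (apply pattern_determined_gsem, gamble_props_at; auto).
  assert (Hweight : forall j, (j < k)%nat -> weight j = fun a => solution j (k + a)%nat).
  { intros j Hj. unfold weight. destruct (Nat.ltb_spec j k); [reflexivity|lia]. }
  split.
  - intros ex [P [[j [Hj HP]] ->]]. rewrite (expect_countermodel P j _ HP Hd), Hweight by auto.
    apply Rge_le, solution_dominates; auto.
  - intros m Hm.
    apply Rle_trans with (expect countermodel (props f) (weighted_measure i)
                            (gsem countermodel (gamble_at f i))).
    + apply Hm. exists (weighted_measure i). split; auto. exists i; split; auto.
    + rewrite (expect_countermodel (weighted_measure i) i _ (fun A => eq_refl) Hd), Hweight
        by auto.
      apply solution_attains; auto.
Qed.

Lemma holds_of_lp_valid : lp_valid f -> holds V f.
Proof.
  intros Hv. specialize (Hv nat countermodel). apply sat_iff_holds in Hv.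
  apply (holds_ext (lexp countermodel) V f); auto. intros g Hg.
  destruct (In_nth (formula_gambles f) g (first_gamble f) Hg) as [i [Hi <-]].
  apply (lexp_countermodel i Hi).
Qed.

End Countermodel.

Theorem completeness {Phi0} (tt : pform Phi0) (Htt : ptautology tt) f :
  lp_valid f -> provable tt f.
Proof.
  intros Hv. apply (provable_linear_consequence tt (premises f)).
  - apply premises_provable; auto.
  - intros V HV. apply (holds_of_lp_valid f V HV Hv).
Qed.

Theorem theorem5p2 (Phi0 : Type) (tt : pform Phi0) (Htt : ptautology tt)
  (f : formula Phi0) : provable tt f <-> lp_valid f.
Proof.
  split.
  - intros H W M. apply sat_iff_holds. apply (soundness tt Htt f H).
  - apply completeness; auto.
Qed.
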